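(* Let $A\in\mathbb{R}^{n\times n}$, let $s$ be an integer with $1\leq s<d(A)$, and let $v_0\in\mathbb{R}^n$ with $\|v_0\|=1$ and $d(A,v_0)\geq s+1$. Let $\Sigma_*^A$ be the set of limit vectors (accumulation points) of the sequence $\{v_k\}$ of the Arnoldi cross iteration ACI($s$) started at $v_0$. Then: (1) $\Sigma_*^A$ is a closed and connected subset of $\mathbb{R}^n$; (2) $\Sigma_*^A\subseteq\Sigma^A$, and every $v_*\in\Sigma_*^A$ satisfies $v_*=T_{A^T}(T_A(v_* ))$.
   Context: Notation: for $A\in\mathbb{R}^{n\times n}$, $d(A)$ is the degree of the minimal polynomial of $A$, $d(A,v)$ is the grade of $v$ w.r.t. $A$ (degree of the monic polynomial $p$ of smallest degree with $p(A)v=0$), $\mathcal{K}_k(A,v)=\mathrm{span}\{v,Av,\dots,A^{k-1}v\}$, $\mathcal{M}_s$ is the set of real monic polynomials of degree $s$, and $\|\cdot\|$ is the Euclidean norm. For a matrix $B$ and a vector $u$ with $d(B,u)\geq s$, let $P_s(\cdot\,;u)\in\mathcal{M}_s$ (determined w.r.t. $B$) be the unique monic polynomial with $P_s(B;u)u\perp\mathcal{K}_s(B,u)$. The Arnoldi cross iteration ACI($s$) started at $v_0$ is: for $k=0,1,2,\dots$: $\widetilde w_k=P_s(A;v_k)v_k$, $w_k=\widetilde w_k/\|\widetilde w_k\|$, $\widetilde v_{k+1}=P_s(A^T;w_k)w_k$, $v_{k+1}=\widetilde v_{k+1}/\|\widetilde v_{k+1}\|$. Define $\Sigma^A:=\{v\in\mathbb{R}^n:\|v\|=1,\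 d(A,v)\geq s+1\}$ and, for unit $v$ with $d(A,v)\geq s+1$, $T_A(v):=P_s(A;v)v/\|P_s(A;v)v\|$; $T_{A^T}$ is defined analogously with $A^T$ in place of $A$. Thus $v_{k+1}=T_{A^T}(T_A(v_k))$. *)

From HB Require Import structures.
From mathcomp Require Import all_boot all_order all_algebra.
From mathcomp Require Import all_classical all_reals all_analysis.
From Stdlib Require Import ClassicalEpsilon.
Set Implicit Arguments. Unset Strict Implicit. Unset Printing Implicit Defensive.
Import Order.TTheory GRing.Theory Num.Theory.
Import numFieldTopology.Exports.
Local Open Scope ring_scope.
Local Open Scope classical_set_scope.

Section Defs.
Variables (R : realType) (n : nat).

Definition enorm (v : 'cV[R]_n) : R := Num.sqrt (\sum_i (v i 0) ^+ 2).

Definition pmx (B : 'M[R]_n) (p : {poly R}) : 'M[R]_n :=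
  \sum_(i < size p) p`_i *: B ^+ i.

Definition annihM (A : 'M[R]_n) (k : nat) : bool :=
  `[< exists p : {poly R}, [/\ p \is monic, size p = k.+1 & pmx A p = 0] >].

Definition annihV (A : 'M[R]_n) (v : 'cV[R]_n) (k : nat) : bool :=
  `[< exists p : {poly R}, [/\ p \is monic, size p = k.+1 & pmx A p *m v = 0] >].

End Defs.

Lemma annihM_ex (R : realType) (n : nat) (A : 'M[R]_n) : exists k, annihM A k.
Proof.
case: n A => [|m] A.
  exists 0%N; apply/asboolP; exists 1; split; rewrite ?monic1 ?size_poly1 //.
  by apply/matrixP => i; case: i.
exists m.+1; apply/asboolP; exists (char_poly A); split.
- exact: char_poly_monic.
- exact: size_char_poly.
- rewrite -[RHS](Cayley_Hamilton A) /pmx /horner_mx /horner_morph horner_coef.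
  rewrite size_map_poly; apply: eq_bigr => i _.
  by rewrite coef_map /= -mul_scalar_mx.
Qed.

Lemma annihV_ex (R : realType) (n : nat) (A : 'M[R]_n) (v : 'cV[R]_n) : exists k, annihV A v k.
Proof.
have [k /asboolP [p [pm ps pA]]] := annihM_ex A.
by exists k; apply/asboolP; exists p; split => //; rewrite pA mul0mx.
Qed.

Section Defs2.
Variables (R : realType) (n : nat).

Definition mdeg (A : 'M[R]_n) : nat := ex_minn (annihM_ex A).

Definition grade (A : 'M[R]_n) (v : 'cV[R]_n) : nat := ex_minn (annihV_ex A v).

Definition orthKrylov (B : 'M[R]_n) (u : 'cV[R]_n) (s : nat) (p : {poly R}) : Prop :=
  [/\ p \is monic, size p = s.+1 &
      forall j : nat, (j < s)%N -> ((B ^+ j *m u)^T *m (pmx B p *m u)) = 0].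

(* P_s(.;u) determined w.r.t. B (the unique such polynomial when d(B,u) >= s) *)
Definition Ps (B : 'M[R]_n) (u : 'cV[R]_n) (s : nat) : {poly R} :=
  epsilon (inhabits 0) (orthKrylov B u s).

Definition Tmap (B : 'M[R]_n) (s : nat) (v : 'cV[R]_n) : 'cV[R]_n :=
  let w := pmx B (Ps B v s) *m v in (enorm w)^-1 *: w.

Definition ACI (A : 'M[R]_n) (s : nat) (v0 : 'cV[R]_n) (k : nat) : 'cV[R]_n :=
  iter k (fun v => Tmap A^T s (Tmap A s v)) v0.

Definition SigmaA (A : 'M[R]_n) (s : nat) : set 'cV[R]_n :=
  [set v | enorm v = 1 /\ (s.+1 <= grade A v)%N].

Definition limit_points (u : nat -> 'cV[R]_n) : set 'cV[R]_n :=
  [set x | forall e : R, 0 < e -> forall N : nat,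
             exists k : nat, (N <= k)%N /\ enorm (u k - x) < e].

End Defs2.

(* For monic q of degree s, ||q(B)x|| is least for q = P_s(B;x); call this least value
   rho_B(x). Moving P_s(A^T;w_k) across the inner product gives
   <v_k, P_s(A^T;w_k) w_k> = rho_A(v_k), hence rho_A(v_k) <= rho_A^T(w_k) <= rho_A(v_k+1)
   and ||v_k+1 - v_k||^2 rho_A^T(w_k) = 2 (rho_A^T(w_k) - rho_A(v_k)). The rho's increase
   and are bounded, so the steps of the bounded sequence (v_k) vanish and its limit points
   form a closed connected set (Ostrowski). Since rho_A(v_k) >= rho_A(v_0) > 0, no limit
   point has grade <= s; and T_B is continuous wherever rho_B > 0, because there the Krylov
   matrix is injective and the coefficients of P_s stay locally bounded. So every limit
   point is fixed by T_A^T o T_A. *)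

From HB Require Import structures.
From mathcomp Require Import all_boot all_order all_algebra.
From mathcomp Require Import all_classical all_reals all_analysis.
From mathcomp Require Import ring lra.
From Stdlib Require Import ClassicalEpsilon.
Set Implicit Arguments. Unset Strict Implicit. Unset Printing Implicit Defensive.
Import Order.TTheory GRing.Theory Num.Theory.
Import numFieldTopology.Exports.
Local Open Scope ring_scope.
Local Open Scope classical_set_scope.

Section EuclideanNorm.
Variable R : realType.

Definition dot n (x y : 'cV[R]_n) : R := \sum_i x i 0 * y i 0.

Lemma dotC n (x y : 'cV[R]_n) : dot x y = dot y x.
Proof. by apply: eq_bigr => i _; rewrite mulrC. Qed.

Lemma dotDl n (x y z : 'cV[R]_n) : dot (x + y) z = dot x z + dot y z.
Proof. by rewrite /dot -big_split; apply: eq_bigr => i _; rewrite mxE mulrDl. Qed.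

Lemma dotDr n (x y z : 'cV[R]_n) : dot z (x + y) = dot z x + dot z y.
Proof. by rewrite dotC dotDl !(dotC z). Qed.

Lemma dotZl n a (x y : 'cV[R]_n) : dot (a *: x) y = a * dot x y.
Proof. by rewrite /dot mulr_sumr; apply: eq_bigr => i _; rewrite mxE mulrA. Qed.

Lemma dotZr n a (x y : 'cV[R]_n) : dot y (a *: x) = a * dot y x.
Proof. by rewrite dotC dotZl dotC. Qed.

Lemma dotNl n (x y : 'cV[R]_n) : dot (- x) y = - dot x y.
Proof. by rewrite -scaleN1r dotZl mulN1r. Qed.

Lemma dotBl n (x y z : 'cV[R]_n) : dot (x - y) z = dot x z - dot y z.
Proof. by rewrite dotDl dotNl. Qed.

Lemma dotBr n (x y z : 'cV[R]_n) : dot z (x - y) = dot z x - dot z y.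
Proof. by rewrite dotC dotBl !(dotC z). Qed.

Lemma dot0l n (x : 'cV[R]_n) : dot 0 x = 0.
Proof. by rewrite /dot big1 // => i _; rewrite mxE mul0r. Qed.

Lemma dot0r n (x : 'cV[R]_n) : dot x 0 = 0.
Proof. by rewrite dotC dot0l. Qed.

Lemma dot_suml n (I : finType) (F : I -> 'cV[R]_n) y :
  dot (\sum_i F i) y = \sum_i dot (F i) y.
Proof.
rewrite /dot exchange_big /=; apply: eq_bigr => i _.
by rewrite summxE mulr_suml.
Qed.

Lemma mulmx_trmx_dot n (x y : 'cV[R]_n) : (x^T *m y) 0 0 = dot x y.
Proof. by rewrite mxE; apply: eq_bigr => i _; rewrite mxE. Qed.

Lemma mulmx_trmx_eq0 n (x y : 'cV[R]_n) : (x^T *m y = 0) <-> dot x y = 0.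
Proof.
split=> [h|h]; first by rewrite -mulmx_trmx_dot h mxE.
by apply/matrixP => i j; rewrite !ord1 mulmx_trmx_dot h mxE.
Qed.

Lemma dot_mulmxl p q (M : 'M[R]_(p, q)) x y : dot (M *m x) y = dot x (M^T *m y).
Proof. by rewrite -!mulmx_trmx_dot trmx_mul -mulmxA. Qed.

Lemma dotvv_ge0 n (x : 'cV[R]_n) : 0 <= dot x x.
Proof. by apply: sumr_ge0 => i _; rewrite -expr2 sqr_ge0. Qed.

Lemma dotvv_eq0 n (x : 'cV[R]_n) : dot x x = 0 -> x = 0.
Proof.
move=> /eqP; rewrite psumr_eq0 => [/allP h|i _]; last by rewrite -expr2 sqr_ge0.
apply/matrixP => i j; rewrite ord1 mxE.
by have /(_ (mem_index_enum i)) := h i; rewrite /= mulf_eq0 orbb => /eqP.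
Qed.

Lemma enormE n (x : 'cV[R]_n) : enorm x = Num.sqrt (dot x x).
Proof. by rewrite /enorm /dot; congr Num.sqrt; apply: eq_bigr => i _; rewrite expr2. Qed.

Lemma enorm_ge0 n (x : 'cV[R]_n) : 0 <= enorm x.
Proof. exact: sqrtr_ge0. Qed.

Lemma sqr_enorm n (x : 'cV[R]_n) : enorm x ^+ 2 = dot x x.
Proof. by rewrite enormE sqr_sqrtr // dotvv_ge0. Qed.

Lemma enorm_eq0 n (x : 'cV[R]_n) : enorm x = 0 -> x = 0.
Proof. by move=> h; apply: dotvv_eq0; rewrite -sqr_enorm h expr0n. Qed.

Lemma enorm_gt0 n (x : 'cV[R]_n) : x != 0 -> 0 < enorm x.
Proof. by move=> x0; rewrite lt_def enorm_ge0 andbT; apply: contraNneq x0 => /enorm_eq0 ->. Qed.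

Lemma enorm0 n : enorm (0 : 'cV[R]_n) = 0.
Proof. by rewrite enormE dot0l sqrtr0. Qed.

Lemma enormZ n a (x : 'cV[R]_n) : enorm (a *: x) = `|a| * enorm x.
Proof. by rewrite !enormE dotZl dotZr mulrA sqrtrM ?sqr_ge0 // -expr2 sqrtr_sqr. Qed.

Lemma enormN n (x : 'cV[R]_n) : enorm (- x) = enorm x.
Proof. by rewrite -scaleN1r enormZ normrN normr1 mul1r. Qed.

Lemma enorm_distC n (x y : 'cV[R]_n) : enorm (x - y) = enorm (y - x).
Proof. by rewrite -enormN opprB. Qed.

Lemma enorm_normalize n (w : 'cV[R]_n) : 0 < enorm w -> enorm ((enorm w)^-1 *: w) = 1.
Proof. by move=> w0; rewrite enormZ ger0_norm ?invr_ge0 ?enorm_ge0 // mulVf // gt_eqF. Qed.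

Lemma dot_le_enorm n (x y : 'cV[R]_n) : dot x y <= enorm x * enorm y.
Proof.
have [->|x0] := eqVneq x 0; first by rewrite dot0l enorm0 mul0r.
have [->|y0] := eqVneq y 0; first by rewrite dot0r enorm0 mulr0.
have xy0 : 0 < enorm x * enorm y by rewrite mulr_gt0 ?enorm_gt0.
have := dotvv_ge0 (enorm y *: x - enorm x *: y).
rewrite !(dotBl, dotBr, dotZl, dotZr) -!sqr_enorm (dotC y x) => h.
suff : enorm x * enorm y * dot x y <= enorm x * enorm y * (enorm x * enorm y).
  by rewrite ler_pM2l.
nra.
Qed.

Lemma ler_enormD n (x y : 'cV[R]_n) : enorm (x + y) <= enorm x + enorm y.
Proof.
rewrite -(ler_pXn2r (n := 2)) ?nnegrE ?addr_ge0 ?enorm_ge0 //.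
rewrite sqr_enorm dotDl !dotDr (dotC y x) -!sqr_enorm.
have := dot_le_enorm x y; nra.
Qed.

Lemma ler_enorm_distD n (x y z : 'cV[R]_n) :
  enorm (x - z) <= enorm (x - y) + enorm (y - z).
Proof. by rewrite -(subrKA y) ler_enormD. Qed.

Lemma lerB_enorm n (x y : 'cV[R]_n) : enorm x - enorm y <= enorm (x - y).
Proof. by rewrite lerBlDr; apply: le_trans (ler_enormD _ _); rewrite subrK. Qed.

Lemma ler_enorm_sum n k (F : 'I_k -> 'cV[R]_n) : enorm (\sum_i F i) <= \sum_i enorm (F i).
Proof.
elim/big_ind2: _ => [|a b c d h1 h2|//]; first by rewrite enorm0.
by apply: le_trans (ler_enormD _ _) _; exact: lerD.
Qed.

Lemma ler_coef_enorm n (x : 'cV[R]_n) i : `|x i 0| <= enorm x.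
Proof.
rewrite /enorm -sqrtr_sqr ler_sqrt ?sumr_ge0 // => [|j _]; last exact: sqr_ge0.
by rewrite (bigD1 i) //= lerDl sumr_ge0 // => j _; rewrite sqr_ge0.
Qed.

Lemma enorm_le_sum_abs n (x : 'cV[R]_n) : enorm x <= \sum_i `|x i 0|.
Proof.
rewrite -(ler_pXn2r (n := 2)) ?nnegrE ?enorm_ge0 ?sumr_ge0 //.
rewrite sqr_enorm expr2 mulr_suml; apply: ler_sum => i _.
apply: (@le_trans _ _ (`|x i 0| * `|x i 0|)); first by rewrite -normrM ler_norm.
by apply: ler_wpM2l => //; rewrite (bigD1 i) //= lerDl sumr_ge0.
Qed.

Definition mxsum_abs p q (M : 'M[R]_(p, q)) : R := \sum_i \sum_j `|M i j|.

Lemma mxsum_abs_ge0 p q (M : 'M[R]_(p, q)) : 0 <= mxsum_abs M.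
Proof. by apply: sumr_ge0 => i _; apply: sumr_ge0. Qed.

Lemma enorm_mulmx_le p q (M : 'M[R]_(p, q)) x : enorm (M *m x) <= mxsum_abs M * enorm x.
Proof.
apply: le_trans (enorm_le_sum_abs _) _.
rewrite /mxsum_abs mulr_suml; apply: ler_sum => i _.
rewrite mxE mulr_suml; apply: le_trans (ler_norm_sum _ _ _) _.
by apply: ler_sum => j _; rewrite normrM ler_wpM2l // ler_coef_enorm.
Qed.

End EuclideanNorm.

Section SupNormComparison.
Variables (R : realType) (n : nat).

Lemma ler_coef_mx_norm p q (M : 'M[R]_(p, q)) i j : `|M i j| <= `|M|.
Proof. by rewrite [`|M|]mx_normrE; apply: (le_bigmax _ (fun ij => `|M ij.1 ij.2|) (i, j)). Qed.

Lemma mx_norm_trmx p q (M : 'M[R]_(p, q)) : `|M^T| = `|M|.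
Proof.
have le_tr a b (N : 'M[R]_(a, b)) : `|N^T| <= `|N|.
  rewrite [`|N^T|]mx_normrE; apply/bigmax_leP; split => // -[i j] _ /=.
  by rewrite mxE ler_coef_mx_norm.
by apply/eqP; rewrite eq_le le_tr /= -{1}(trmxK M) le_tr.
Qed.

Lemma mx_norm_le_enorm (x : 'cV[R]_n) : `|x| <= enorm x.
Proof.
rewrite [`|x|]mx_normrE; apply/bigmax_leP; split; first exact: enorm_ge0.
by move=> [i j] _ /=; rewrite ord1 ler_coef_enorm.
Qed.

Lemma enorm_le_mx_norm (x : 'cV[R]_n) : enorm x <= n%:R * `|x|.
Proof.
apply: le_trans (enorm_le_sum_abs x) _.
apply: le_trans (ler_sum _ (G := fun _ => `|x|) _) _; first by move=> i _; exact: ler_coef_mx_norm.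
by rewrite sumr_const card_ord mulr_natl.
Qed.

Lemma ball_enorm_lt (p : 'cV[R]_n) e : 0 < e -> ball p (e / (n%:R + 1)) `<=` [set q | enorm (q - p) < e].
Proof.
move=> e0 q; rewrite -ball_normE /ball_ /= => h.
apply: le_lt_trans (enorm_le_mx_norm _) _; rewrite -normrN opprB.
apply: le_lt_trans (ler_wpM2l (ler0n _ n) (ltW h)) _.
have n0 : 0 <= n%:R :> R by [].
by rewrite mulrA ltr_pdivrMr ?ltr_wpDl //; nra.
Qed.

Lemma nbhs_enorm (p : 'cV[R]_n) (B : set 'cV[R]_n) : nbhs p B ->
  exists2 e, 0 < e & forall q, enorm (q - p) < e -> B q.
Proof.
move=> /nbhs_ballP [e e0 sB]; exists e => // q hq; apply: sB.
rewrite -ball_normE /ball_ /=; apply: le_lt_trans (mx_norm_le_enorm _) _.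
by rewrite enorm_distC.
Qed.

Lemma enorm_nbhs (p : 'cV[R]_n) e : 0 < e -> nbhs p [set q | enorm (q - p) < e].
Proof.
move=> e0; apply: filterS (ball_enorm_lt e0) _.
by apply: nbhsx_ballx; rewrite divr_gt0 // ltr_wpDl.
Qed.

Lemma closureP_enorm (A : set 'cV[R]_n) x :
  (forall e, 0 < e -> exists a, A a /\ enorm (a - x) < e) -> closure A x.
Proof.
move=> h B /nbhs_enorm [e e0 hB].
by have [a [Aa ha]] := h e e0; exists a; split => //; exact: hB.
Qed.

End SupNormComparison.

Section LimitPoints.
Variables (R : realType) (n : nat).
Implicit Types (u : nat -> 'cV[R]_n) (r : R).

(* Bolzano-Weierstrass; compactness of closed balls is available for row vectors. *)
Lemma bounded_limit_points u r : (forall k, enorm (u k) <= r) -> exists x, limit_points u x.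
Proof.
move=> ur; pose b k := (u k)^T.
pose K := closed_ball (0 : 'rV[R]_n) (`|r| + 1).
have r10 : 0 < `|r| + 1 by rewrite ltr_wpDl.
have cK : compact K.
  apply: bounded_closed_compact; last exact: closed_ball_closed.
  exists (`|r| + 1); split; first by rewrite num_real.
  move=> M M2 v; rewrite /K closed_ballE //= /closed_ball_ /= sub0r normrN => hv.
  exact: le_trans hv (ltW M2).
have bK k : K (b k).
  rewrite /K closed_ballE //= /closed_ball_ /= sub0r normrN [`|b k|]mx_normrE.
  apply/bigmax_leP; split => // -[i j] _ /=.
  rewrite ord1 mxE; apply: le_trans (ler_coef_enorm _ _) _.
  by apply: le_trans (ur k) _; apply: le_trans (ler_norm r) _; rewrite lerDl.
have FK : (b @ \oo) K by rewrite /fmap /=; apply: filterE; exact: bK.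
have [x [_ clx]] := cK _ (fmap_proper_filter _ _) FK.
exists x^T => e e0 N.
have e'0 : 0 < e / (n%:R + 1) by rewrite divr_gt0 // ltr_wpDl.
have [|_ [[k Nk <-] hk]] := clx (b @` [set k | (N <= k)%N]) _ _ (nbhsx_ballx _ _ e'0).
  by apply: filterS (nbhs_infty_ge N) => k Nk; exists k.
exists k; split => //; apply: (ball_enorm_lt (p := x^T) e0).
by move: hk; rewrite -!ball_normE /ball_ /= -[`|x^T - _|]mx_norm_trmx linearB /= trmxK.
Qed.

Lemma closed_limit_points u : closed (limit_points u).
Proof.
move=> p cp e e0 N.
have e20 : 0 < e / 2 by rewrite divr_gt0.
have [q [Lq pq]] := cp _ (enorm_nbhs p e20).
have [k [Nk hk]] := Lq _ e20 N.
exists k; split => //; apply: le_lt_trans (ler_enorm_distD _ q _) _.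
by move: pq => /= pq; lra.
Qed.

Lemma limit_points_enorm_le u r x :
  (forall k, enorm (u k) <= r) -> limit_points u x -> enorm x <= r.
Proof.
move=> ur Lx; apply/ler_addgt0Pr => e e0.
have [k [_ hk]] := Lx e e0 0%N.
by have := lerB_enorm x (u k); rewrite enorm_distC; have := ur k; lra.
Qed.

Lemma limit_points_enorm u r x :
  (forall k, enorm (u k) = r) -> limit_points u x -> enorm x = r.
Proof.
move=> ur Lx; apply/eqP; rewrite eq_le (limit_points_enorm_le _ Lx) => [|k]; last by rewrite ur.
apply/ler_addgt0Pr => e e0; have [k [_ hk]] := Lx e e0 0%N.
by have := lerB_enorm (u k) x; rewrite ur; lra.
Qed.

Lemma separated_dist_gt0 (A0 A1 : set 'cV[R]_n) r :
  (forall a, A0 a -> enorm a <= r) ->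
  (forall x, closure A0 x -> closure A1 x -> False) ->
  exists2 d, 0 < d & forall a b, A0 a -> A1 b -> d <= enorm (a - b).
Proof.
move=> A0r sep; apply: contrapT => no_gap.
have close_pairs m : exists ab : 'cV[R]_n * 'cV[R]_n,
    [/\ A0 ab.1, A1 ab.2 & enorm (ab.1 - ab.2) < m.+1%:R^-1].
  apply: contrapT => hm; apply: no_gap; exists m.+1%:R^-1 => // a b Aa Ab.
  by rewrite leNgt; apply/negP => hlt; apply: hm; exists (a, b).
have [f hf] := boolp.choice close_pairs.
have [x Lx] : exists x, limit_points (fun m => (f m).1) x.
  by apply: (bounded_limit_points (r := r)) => m; have [/A0r] := hf m.
apply: (sep x).
  apply: closureP_enorm => e e0; have [m [_ hm]] := Lx e e0 0%N.
  by exists (f m).1; split => //; have [] := hf m.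
apply: closureP_enorm => e e0.
have e20 : 0 < e / 2 by rewrite divr_gt0.
have [N hN] := ltr_add_invr (y := 0) e20; rewrite add0r in hN.
have [m [Nm hm]] := Lx _ e20 N.
have [_ A1m dm] := hf m.
exists (f m).2; split => //.
apply: le_lt_trans (ler_enorm_distD _ (f m).1 _) _.
have mN : m.+1%:R^-1 <= N.+1%:R^-1 :> R by rewrite lef_pV2 ?posrE // ler_nat ltnS.
rewrite enorm_distC in dm; rewrite [X in _ < X](splitr e) ltrD //.
exact: lt_le_trans dm (le_trans mN (ltW hN)).
Qed.

Definition thicken (A : set 'cV[R]_n) e := [set x | exists2 a, A a & enorm (x - a) < e].

Lemma crossing_gap u (A0 A1 : set 'cV[R]_n) d N0 :
  (forall a b, A0 a -> A1 b -> d <= enorm (a - b)) ->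
  (forall k, (N0 <= k)%N -> enorm (u k.+1 - u k) < d / 3) ->
  forall i k, (N0 <= k)%N -> thicken A0 (d / 3) (u k) -> thicken A1 (d / 3) (u (k + i)%N) ->
  exists j, [/\ (k <= j)%N, ~ thicken A0 (d / 3) (u j) & ~ thicken A1 (d / 3) (u j)].
Proof.
move=> gap steps; elim=> [|i IH] k Nk [a A0a ha] h1.
  rewrite addn0 in h1; case: h1 => b A1b hb; exfalso.
  have := gap a b A0a A1b; have := ler_enorm_distD a (u k) b.
  by have := enorm_ge0 (u k - b); rewrite enorm_distC in ha; lra.
have [h0'|h0'] := pselect (thicken A0 (d / 3) (u k.+1)).
  rewrite -addSnnS in h1; have [j [kj hj0 hj1]] := IH k.+1 (leqW Nk) h0' h1.
  by exists j; split => //; apply: ltnW.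
exists k.+1; split => // -[b A1b hb].
have := gap a b A0a A1b; have := steps k Nk.
have := ler_enorm_distD a (u k) b; have := ler_enorm_distD (u k) (u k.+1) b.
have := enorm_ge0 (u k.+1 - b).
by rewrite enorm_distC in ha; rewrite (enorm_distC (u k) (u k.+1)); lra.
Qed.

Lemma connected_limit_points u r : (forall k, enorm (u k) <= r) ->
  (forall e, 0 < e -> exists N, forall k, (N <= k)%N -> enorm (u k.+1 - u k) < e) ->
  connected (limit_points u).
Proof.
move=> ur steps; set L := limit_points u.
apply: contrapT => /connectedPn [E [En LE [s1 s2]]].
set A0 := E false; set A1 := E true.
have A0L : A0 `<=` L by rewrite LE => x ?; left.
have A1L : A1 `<=` L by rewrite LE => x ?; right.
have sep x : closure A0 x -> closure A1 x -> False.
  move=> c0 c1; have := closed_limit_points (closureS A0L c0).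
  rewrite -/L LE => -[x0|x1].
    by have : (A0 `&` closure A1) x by []; rewrite s2.
  by have : (closure A0 `&` A1) x by []; rewrite s1.
have [d d0 gap] := separated_dist_gt0
  (fun a A0a => limit_points_enorm_le ur (A0L _ A0a)) sep.
have d30 : 0 < d / 3 by rewrite divr_gt0.
have [N0 hN0] := steps _ d30.
have between N : exists j,
    [/\ (N <= j)%N, ~ thicken A0 (d / 3) (u j) & ~ thicken A1 (d / 3) (u j)].
  have [a0 A0a0] := En false; have [b0 A1b0] := En true.
  have [k [Nk hk]] := A0L _ A0a0 _ d30 (maxn N N0).
  have [k' [kk' hk']] := A1L _ A1b0 _ d30 k.
  have h1 : thicken A1 (d / 3) (u (k + (k' - k))%N) by rewrite subnKC //; exists b0.
  have [j [kj hj0 hj1]] := crossing_gap gap hN0 (leq_trans (leq_maxr _ _) Nk)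
    (ex_intro2 _ _ a0 A0a0 hk) h1.
  by exists j; split => //; apply: leq_trans (leq_trans (leq_maxl _ _) Nk) kj.
have [f hf] := boolp.choice between.
have [x Lfx] := bounded_limit_points (fun m => ur (f m)).
have Lx : L x.
  move=> e e0 N; have [m [Nm hm]] := Lfx e e0 N.
  by exists (f m); split => //; apply: leq_trans Nm _; have [] := hf m.
have [m [_ hm]] := Lfx _ d30 0%N; have [_ nA0 nA1] := hf m.
by move: Lx; rewrite LE => -[x0|x1]; [apply: nA0 | apply: nA1]; exists x.
Qed.

End LimitPoints.

Section Gram.
Variable R : realType.

Lemma gram_unitmx p q (K : 'M[R]_(p, q)) :
  (forall c : 'cV[R]_q, K *m c = 0 -> c = 0) -> K^T *m K \in unitmx.
Proof.
move=> inj; rewrite unitmxE unitfE; apply/negP => /det0P [v v0 hv].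
have hK : K *m v^T = 0.
  apply: dotvv_eq0; rewrite -mulmx_trmx_dot trmx_mul trmxK.
  by rewrite mulmxA -(mulmxA v) hv mul0mx mxE.
by move: v0; rewrite -(trmxK v) (inj _ hK) trmx0 eqxx.
Qed.

Lemma injective_mulmx_lower_bound p q (K : 'M[R]_(p, q)) :
  (forall c : 'cV[R]_q, K *m c = 0 -> c = 0) ->
  exists2 lam, 0 <= lam & forall c : 'cV[R]_q, enorm c <= lam * enorm (K *m c).
Proof.
move=> inj; exists (mxsum_abs (invmx (K^T *m K) *m K^T)) => [|c].
  exact: mxsum_abs_ge0.
apply: le_trans (enorm_mulmx_le _ _).
by rewrite -mulmxA [K^T *m (K *m c)]mulmxA mulKmx // gram_unitmx.
Qed.

End Gram.

Section MatrixPolynomial.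
Variables (R : realType) (m : nat).
Local Notation N := m.+1.
Implicit Types (B : 'M[R]_N) (x y : 'cV[R]_N) (p q : {poly R}).

Lemma pmx_horner B p : pmx B p = horner_mx B p.
Proof.
rewrite /pmx /horner_mx /horner_morph horner_coef size_map_poly.
by apply: eq_bigr => i _; rewrite coef_map /= -mul_scalar_mx.
Qed.

Lemma pmx_widen B p k : (size p <= k)%N -> pmx B p = \sum_(i < k) p`_i *: B ^+ i.
Proof.
move=> pk; rewrite /pmx (big_ord_widen k (fun i => p`_i *: B ^+ i)) //.
rewrite big_mkcond /=; apply: eq_bigr => i _.
by case: ifP => // /negbT; rewrite -leqNgt => /leq_sizeP -> //; rewrite scale0r.
Qed.

Lemma pmxD B p q : pmx B (p + q) = pmx B p + pmx B q.
Proof. by rewrite !pmx_horner rmorphD. Qed.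

Lemma pmxZ B a p : pmx B (a *: p) = a *: pmx B p.
Proof. by rewrite !pmx_horner horner_mxZ. Qed.

Lemma pmxM B p q : pmx B (p * q) = pmx B p *m pmx B q.
Proof. by rewrite !pmx_horner rmorphM mulmxE. Qed.

Lemma pmxXn B k : pmx B 'X^k = B ^+ k.
Proof. by rewrite pmx_horner rmorphXn /= horner_mx_X. Qed.

Lemma trmxX B k : (B ^+ k)^T = B^T ^+ k.
Proof.
elim: k => [|k IH]; first by rewrite !expr0 trmx1.
by rewrite exprSr exprS -!mulmxE trmx_mul IH.
Qed.

Lemma pmx_trmx B p : pmx B^T p = (pmx B p)^T.
Proof. by rewrite /pmx raddf_sum /=; apply: eq_bigr => i _; rewrite linearZ /= trmxX. Qed.

Lemma size_monicB p q : p \is monic -> q \is monic ->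
  size p = size q -> (size (q - p)%R < size p)%N.
Proof.
move=> mp mq spq; have p0 : (0 < size p)%N by rewrite size_poly_gt0 monic_neq0.
rewrite -(prednK p0) ltnS; apply/leq_sizeP => j; rewrite leq_eqVlt coefB.
case/orP => [/eqP <-|]; last rewrite prednK // => pj.
  by move/monicP: mp; move/monicP: mq; rewrite /lead_coef -spq => -> ->; rewrite subrr.
by rewrite !nth_default ?subrr // -spq.
Qed.

Variable s : nat.

Definition krylov B x : 'M[R]_(N, s) := \matrix_(i, j) (B ^+ j *m x) i 0.

Lemma krylov_mulmx B x (c : 'cV[R]_s) : krylov B x *m c = \sum_(j < s) c j 0 *: (B ^+ j *m x).
Proof.
apply/matrixP => i k; rewrite ord1 !mxE summxE; apply: eq_bigr => j _.
by rewrite !mxE mulrC.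
Qed.

Lemma krylov_delta B x (j : 'I_s) : krylov B x *m delta_mx j 0 = B ^+ j *m x.
Proof.
apply/matrixP => i k; rewrite ord1 !mxE (bigD1 j) //= big1 => [|l lj].
  by rewrite !mxE !eqxx mulr1 addr0.
by rewrite !mxE (negbTE lj) mulr0.
Qed.

Lemma krylovB B x y (c : 'cV[R]_s) : krylov B (x - y) *m c = krylov B x *m c - krylov B y *m c.
Proof. by rewrite !krylov_mulmx -sumrB; apply: eq_bigr => j _; rewrite mulmxBr scalerBr. Qed.

Lemma pmx_lowdeg B x q : (size q <= s)%N ->
  pmx B q *m x = krylov B x *m \col_(j < s) q`_j.
Proof.
move=> qs; rewrite (pmx_widen B qs) krylov_mulmx mulmx_suml.
by apply: eq_bigr => j _; rewrite mxE -scalemxAl.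
Qed.

Definition poly_of_col (c : 'cV[R]_s) : {poly R} :=
  \poly_(i < s) oapp (fun j => c j 0) 0 (insub i).

Lemma size_poly_of_col c : (size (poly_of_col c) <= s)%N.
Proof. exact: size_poly. Qed.

Lemma col_poly_of_col c : \col_(j < s) (poly_of_col c)`_j = c.
Proof. by apply/matrixP => i j; rewrite ord1 !mxE coef_poly ltn_ord valK. Qed.

Lemma pmx_monic B y p : p \is monic -> size p = s.+1 ->
  pmx B p *m y = B ^+ s *m y + krylov B y *m \col_(j < s) (p - 'X^s)`_j.
Proof.
move=> mp sp; rewrite -{1}(subrK 'X^s p) pmxD mulmxDl pmxXn addrC -pmx_lowdeg //.
by have := size_monicB (monicXn R s) mp; rewrite size_polyXn sp ltnS; apply.
Qed.

End MatrixPolynomial.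

Section MinimalResidual.
Variables (R : realType) (m s : nat).
Local Notation N := m.+1.
Implicit Types (B : 'M[R]_N) (x : 'cV[R]_N) (p q : {poly R}).
Local Notation krylov := (@krylov R m s).

Lemma orthKrylov_lowdeg B x p q : orthKrylov B x s p -> (size q <= s)%N ->
  dot (pmx B q *m x) (pmx B p *m x) = 0.
Proof.
move=> [_ _ orth] qs; rewrite (pmx_widen B qs) mulmx_suml dot_suml big1 // => i _.
by rewrite -scalemxAl dotZl (proj1 (mulmx_trmx_eq0 _ _) (orth _ (ltn_ord i))) mulr0.
Qed.

Lemma orthKrylov_dot_monic B x p q : orthKrylov B x s p -> q \is monic -> size q = s.+1 ->
  dot (pmx B p *m x) (pmx B q *m x) = enorm (pmx B p *m x) ^+ 2.
Proof.
move=> op mq sq; have [mp sp _] := op.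
have qp : (size (q - p)%R <= s)%N by rewrite -ltnS -sp size_monicB // sp sq.
rewrite -(subrK p q) pmxD mulmxDl dotDr dotC (orthKrylov_lowdeg op qp).
by rewrite add0r sqr_enorm.
Qed.

Lemma orthKrylov_min B x p q : orthKrylov B x s p -> q \is monic -> size q = s.+1 ->
  enorm (pmx B p *m x) <= enorm (pmx B q *m x).
Proof.
move=> op mq sq; have := dot_le_enorm (pmx B p *m x) (pmx B q *m x).
rewrite orthKrylov_dot_monic // expr2.
have [->|p0] := eqVneq (enorm (pmx B p *m x)) 0; first by rewrite enorm_ge0.
by rewrite ler_pM2l // lt_def p0 enorm_ge0.
Qed.

Lemma monic_annihilator_widen B x p : p \is monic -> (size p <= s.+1)%N ->
  pmx B p *m x = 0 -> exists q, [/\ q \is monic, size q = s.+1 & pmx B q *m x = 0].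
Proof.
move=> mp sp px; exists ('X^(s.+1 - size p) * p); split.
- by rewrite monicMl // monicXn.
- by rewrite size_Mmonic // -?size_poly_eq0 size_polyXn //= subnK.
- by rewrite pmxM -mulmxA px mulmx0.
Qed.

Lemma krylov_ker_annihilator B x (c : 'cV[R]_s) : c != 0 -> krylov B x *m c = 0 ->
  exists q, [/\ q \is monic, size q = s.+1 & pmx B q *m x = 0].
Proof.
move=> c0 Kc; pose p := poly_of_col c.
have pc : \col_(j < s) p`_j = c by exact: col_poly_of_col.
have px : pmx B p *m x = 0 by rewrite (pmx_lowdeg (s := s)) ?size_poly_of_col // pc.
have p0 : p != 0 by apply: contraNneq c0 => p0; rewrite -pc p0; apply/eqP/matrixP => i j; rewrite !mxE coef0.
apply: (@monic_annihilator_widen B x ((lead_coef p)^-1 *: p)).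
- by rewrite monicE lead_coefZ mulVf // lead_coef_eq0.
- by rewrite size_scale ?invr_eq0 ?lead_coef_eq0 // ltnW // ltnS size_poly_of_col.
- by rewrite pmxZ -scalemxAl px scaler0.
Qed.

(* When the Krylov matrix K is injective, the coefficients solve the normal
   equations K^T K c = - K^T B^s x. *)
Lemma Ps_orthKrylov B x : orthKrylov B x s (Ps B x s).
Proof.
apply: epsilon_spec.
have [[c [c0 Kc]]|inj] := pselect (exists c : 'cV[R]_s, c != 0 /\ krylov B x *m c = 0).
  have [q [mq sq qx]] := krylov_ker_annihilator c0 Kc.
  by exists q; split => // j _; rewrite qx mulmx0.
have {}inj (c : 'cV[R]_s) : krylov B x *m c = 0 -> c = 0.
  by move=> Kc; apply: contrapT => c0; apply: inj; exists c; split => //; exact/eqP.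
set K := krylov B x; set G := K^T *m K.
set c := - (invmx G *m (K^T *m (B ^+ s *m x))).
pose p := 'X^s + poly_of_col c.
have sp : size p = s.+1 by rewrite size_polyDl size_polyXn // ltnS size_poly_of_col.
have mp : p \is monic.
  by rewrite monicE /lead_coef sp coefD coefXn eqxx coef_poly ltnn addr0.
exists p; split => // j js.
rewrite (pmx_monic (s := s)) // -/K -(krylov_delta B x (Ordinal js)) -/K.
have -> : \col_(j < s) (p - 'X^s)`_j = c by rewrite addrC addKr col_poly_of_col.
rewrite trmx_mul -mulmxA mulmxDr /c !mulmxN (mulmxA K^T K) -/G mulKVmx ?gram_unitmx //.
by rewrite subrr mulmx0.
Qed.

Definition resid B x := pmx B (Ps B x s) *m x.
Definition rho B x := enorm (resid B x).

Lemma Ps_monic B x : Ps B x s \is monic.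
Proof. by have [] := Ps_orthKrylov B x. Qed.

Lemma size_Ps B x : size (Ps B x s) = s.+1.
Proof. by have [] := Ps_orthKrylov B x. Qed.

Lemma rho_min B x q : q \is monic -> size q = s.+1 -> rho B x <= enorm (pmx B q *m x).
Proof. exact: orthKrylov_min (Ps_orthKrylov B x). Qed.

Lemma dot_resid_monic B x q : q \is monic -> size q = s.+1 ->
  dot (resid B x) (pmx B q *m x) = rho B x ^+ 2.
Proof. exact: orthKrylov_dot_monic (Ps_orthKrylov B x). Qed.

Lemma rho_le_mxsum_abs B x : rho B x <= mxsum_abs (B ^+ s) * enorm x.
Proof.
have := rho_min B x (monicXn _ s) (size_polyXn _ s); rewrite pmxXn => h.
exact: le_trans h (enorm_mulmx_le _ _).
Qed.

Lemma grade_no_annihilator B x p : (s.+1 <= grade B x)%N -> p \is monic ->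
  (size p <= s.+1)%N -> pmx B p *m x != 0.
Proof.
rewrite /grade; case: ex_minnP => g _ gmin sg mp sp; apply/eqP => px.
have p0 : (0 < size p)%N by rewrite size_poly_gt0 monic_neq0.
have : annihV B x (size p).-1 by apply/asboolP; exists p; rewrite prednK.
move/gmin; rewrite -ltnS prednK // => gp.
by have := leq_trans (leq_ltn_trans sg gp) sp; rewrite ltnn.
Qed.

Lemma grade_le_annihilator B x : ~~ (s.+1 <= grade B x)%N ->
  exists q, [/\ q \is monic, size q = s.+1 & pmx B q *m x = 0].
Proof.
rewrite /grade; case: ex_minnP => g /asboolP [p [mp sp px]] _.
by rewrite -ltnNge ltnS => gs; apply: (monic_annihilator_widen mp) => //; rewrite sp ltnS.
Qed.

Lemma rho_gt0 B x : (s.+1 <= grade B x)%N -> 0 < rho B x.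
Proof.
move=> sg; apply: enorm_gt0.
exact: grade_no_annihilator sg (Ps_monic B x) (eq_leq (size_Ps B x)).
Qed.

Lemma rho_gt0_krylov_inj B x : 0 < rho B x -> forall c : 'cV[R]_s, krylov B x *m c = 0 -> c = 0.
Proof.
move=> r0 c Kc; apply: contrapT => /eqP c0.
have [q [mq sq qx]] := krylov_ker_annihilator c0 Kc.
by have := rho_min B x mq sq; rewrite qx enorm0 leNgt r0.
Qed.

End MinimalResidual.

Section CrossStep.
Variables (R : realType) (m s : nat).
Local Notation N := m.+1.
Implicit Types (B : 'M[R]_N) (x : 'cV[R]_N).
Local Notation resid := (@resid R m s).
Local Notation rho := (@rho R m s).

Lemma Tmap_resid B x : Tmap B s x = (rho B x)^-1 *: resid B x.
Proof. by []. Qed.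

Lemma enorm_Tmap B x : 0 < rho B x -> enorm (Tmap B s x) = 1.
Proof. exact: enorm_normalize. Qed.

(* The transposed residual at y = T_B x, read against x, is rho_B(x): move the
   polynomial of B^T across the inner product and use the orthogonality at x. *)
Lemma dot_resid_trmx_Tmap B x : 0 < rho B x -> dot x (resid B^T (Tmap B s x)) = rho B x.
Proof.
move=> r0; rewrite /resid pmx_trmx -dot_mulmxl dotC Tmap_resid dotZl.
by rewrite dot_resid_monic ?Ps_monic ?size_Ps // expr2 mulKf ?gt_eqF.
Qed.

Lemma rho_le_rho_trmx_Tmap B x : enorm x = 1 -> 0 < rho B x ->
  rho B x <= rho B^T (Tmap B s x).
Proof.
move=> x1 r0; rewrite -{1}(dot_resid_trmx_Tmap r0).
by apply: le_trans (dot_le_enorm _ _) _; rewrite x1 mul1r.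
Qed.

Lemma Tmap_cross_dist B x : enorm x = 1 -> 0 < rho B x ->
  enorm (Tmap B^T s (Tmap B s x) - x) ^+ 2 * rho B^T (Tmap B s x)
    = 2 * (rho B^T (Tmap B s x) - rho B x).
Proof.
move=> x1 r0; have r'0 := lt_le_trans r0 (rho_le_rho_trmx_Tmap x1 r0).
rewrite [Tmap B^T _ _]Tmap_resid sqr_enorm dotBl !dotBr !dotZl !dotZr.
rewrite -(sqr_enorm x) x1 (dotC _ x) dot_resid_trmx_Tmap // -sqr_enorm -/(rho _ _).
by field; rewrite gt_eqF.
Qed.

End CrossStep.

Section ResidContinuity.
Variables (R : realType) (m s : nat).
Local Notation N := m.+1.
Implicit Types (B : 'M[R]_N) (x y : 'cV[R]_N).
Local Notation krylov := (@krylov R m s).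
Local Notation resid := (@resid R m s).
Local Notation rho := (@rho R m s).

Definition krylov_bound B : R := \sum_(j < s) mxsum_abs (B ^+ j).

Lemma krylov_bound_ge0 B : 0 <= krylov_bound B.
Proof. by apply: sumr_ge0 => j _; exact: mxsum_abs_ge0. Qed.

Lemma enorm_krylov_le B y (c : 'cV[R]_s) :
  enorm (krylov B y *m c) <= krylov_bound B * enorm y * enorm c.
Proof.
rewrite krylov_mulmx; apply: le_trans (ler_enorm_sum _) _.
rewrite /krylov_bound !mulr_suml; apply: ler_sum => j _.
rewrite enormZ mulrC; apply: ler_pM; rewrite ?normr_ge0 ?enorm_ge0 ?ler_coef_enorm //.
exact: enorm_mulmx_le.
Qed.

Definition Ps_coefs B x : 'cV[R]_s := \col_(j < s) (Ps B x s - 'X^s)`_j.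

Lemma pmx_Ps B x y : pmx B (Ps B x s) *m y = B ^+ s *m y + krylov B y *m Ps_coefs B x.
Proof. exact: pmx_monic (Ps_monic _ _ _) (size_Ps _ _ _). Qed.

Variables (B : 'M[R]_N) (xs : 'cV[R]_N) (lam : R).
Hypothesis lam_ge0 : 0 <= lam.
Hypothesis krylov_lower : forall c : 'cV[R]_s, enorm c <= lam * enorm (krylov B xs *m c).

Let beta := mxsum_abs (B ^+ s).
Let kappa := krylov_bound B.
Let gamma := mxsum_abs (pmx B (Ps B xs s)).
Let coef_bound := 4 * lam * beta * (enorm xs + 1).
Let eta := beta + kappa * coef_bound.

Lemma enorm_Ps_coefs_le x : enorm (x - xs) <= 1 -> 2 * lam * kappa * enorm (x - xs) <= 1 ->
  enorm (Ps_coefs B x) <= coef_bound.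
Proof.
set d := enorm (x - xs); set c := Ps_coefs B x => d1 small.
have be0 : 0 <= beta by exact: mxsum_abs_ge0.
have ka0 : 0 <= kappa by exact: krylov_bound_ge0.
have c0 := enorm_ge0 c.
have x_le : enorm x <= enorm xs + d by rewrite -{1}(subrK xs x) addrC ler_enormD.
have Kx_le : enorm (krylov B x *m c) <= 2 * beta * enorm x.
  have -> : krylov B x *m c = resid B x - B ^+ s *m x by rewrite /resid pmx_Ps addrC addKr.
  apply: le_trans (ler_enormD _ _) _; rewrite enormN.
  by have := rho_le_mxsum_abs s B x; have := enorm_mulmx_le (B ^+ s) x; rewrite /rho -/beta; lra.
have : enorm c <= lam * (2 * beta * enorm x + kappa * d * enorm c).
  apply: le_trans (krylov_lower c) _; apply: ler_wpM2l => //.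
  have -> : krylov B xs *m c = krylov B x *m c - krylov B (x - xs) *m c.
    by rewrite krylovB opprB addrC subrK.
  by apply: le_trans (ler_enormD _ _) _; rewrite enormN lerD ?enorm_krylov_le.
have : 0 <= (1 - 2 * lam * kappa * d) * enorm c by rewrite mulr_ge0 // subr_ge0.
have : lam * beta * enorm x <= lam * beta * (enorm xs + 1) by rewrite ler_wpM2l ?mulr_ge0 //; lra.
rewrite /coef_bound; nra.
Qed.

Section Near.
Variable x : 'cV[R]_N.
Hypothesis near1 : enorm (x - xs) <= 1.
Hypothesis near_krylov : 2 * lam * kappa * enorm (x - xs) <= 1.
Local Notation d := (enorm (x - xs)).

Lemma rho_center_le : rho B xs <= rho B x + eta * d.
Proof.
have d0 := enorm_ge0 (x - xs).
apply: le_trans (rho_min B xs (Ps_monic s B x) (size_Ps s B x)) _.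
have -> : pmx B (Ps B x s) *m xs = resid B x - pmx B (Ps B x s) *m (x - xs).
  by rewrite mulmxBr /resid opprB addrC subrK.
apply: le_trans (ler_enormD _ _) _; rewrite enormN lerD // pmx_Ps.
apply: le_trans (ler_enormD _ _) _; rewrite /eta mulrDl lerD ?enorm_mulmx_le //.
apply: le_trans (enorm_krylov_le _ _ _) _; rewrite -/kappa -mulrA -[X in _ <= X]mulrA.
rewrite ler_wpM2l ?krylov_bound_ge0 // [d * _]mulrC ler_wpM2r //; exact: enorm_Ps_coefs_le.
Qed.

(* With z := P_s(B;xs) x, orthogonality at x gives Pythagoras
   ||resid x - z||^2 = ||z||^2 - rho(x)^2, and both ||z|| and rho(x) are within O(d)
   of rho(xs). *)
Lemma enorm_resid_dist_le : enorm (resid B x - resid B xs) <=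
  Num.sqrt ((gamma + eta) * (2 * (rho B xs + gamma)) * d) + gamma * d.
Proof.
have d0 := enorm_ge0 (x - xs).
have ga0 : 0 <= gamma by exact: mxsum_abs_ge0.
have et0 : 0 <= eta.
  by rewrite addr_ge0 ?mxsum_abs_ge0 // mulr_ge0 ?krylov_bound_ge0 // !mulr_ge0 ?mxsum_abs_ge0 ?addr_ge0 ?enorm_ge0.
have r0 := enorm_ge0 (resid B xs).
set z := pmx B (Ps B xs s) *m x.
have rho_z : rho B x <= enorm z := rho_min B x (Ps_monic s B xs) (size_Ps s B xs).
have z_res : enorm (z - resid B xs) <= gamma * d by rewrite /z /resid -mulmxBr enorm_mulmx_le.
have z_le : enorm z <= rho B xs + gamma * d.
  by rewrite -{1}(subrK (resid B xs) z) addrC; apply: le_trans (ler_enormD _ _) _; rewrite /rho; lra.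
have pythagoras : enorm (resid B x - z) ^+ 2 = enorm z ^+ 2 - rho B x ^+ 2.
  rewrite !sqr_enorm dotBl !dotBr (dotC z) !(dot_resid_monic B x (Ps_monic s B xs)) ?size_Ps //.
  by rewrite -!sqr_enorm -/(rho B x); ring.
have rho_le := rho_center_le.
have gd : gamma * d <= gamma by rewrite ler_piMr.
apply: le_trans (ler_enorm_distD _ z _) _; rewrite lerD //.
rewrite -(ler_pXn2r (n := 2)) ?nnegrE ?enorm_ge0 ?sqrtr_ge0 //.
have M0 : 0 <= (gamma + eta) * (2 * (rho B xs + gamma)) * d.
  apply: mulr_ge0 => //; apply: mulr_ge0; first exact: addr_ge0.
  by rewrite mulr_ge0 // addr_ge0.
rewrite pythagoras [X in _ <= X]sqr_sqrtr //.
rewrite (_ : _ - _ = (enorm z - rho B x) * (enorm z + rho B x)); last by ring.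
rewrite mulrAC; apply: ler_pM; rewrite ?subr_ge0 ?addr_ge0 ?enorm_ge0 //; rewrite /rho in rho_le rho_z z_le *; lra.
Qed.

End Near.

End ResidContinuity.

Lemma sqrt_linear_small (R : realType) (M g e : R) : 0 <= M -> 0 <= g -> 0 < e ->
  exists2 d, 0 < d & forall t, 0 <= t -> t < d -> Num.sqrt (M * t) + g * t < e.
Proof.
move=> M0 g0 e0.
have d10 : 0 < e ^+ 2 / (4 * (M + 1)) by rewrite divr_gt0 ?exprn_gt0 // mulr_gt0 //; lra.
have d20 : 0 < e / (2 * (g + 1)) by rewrite divr_gt0 // mulr_gt0 //; lra.
exists (Num.min (e ^+ 2 / (4 * (M + 1))) (e / (2 * (g + 1)))); first by rewrite lt_min d10.
move=> t t0; rewrite lt_min => /andP [t1 t2].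
move: t1; rewrite ltr_pdivlMr ?mulr_gt0 //; last lra; move=> t1.
move: t2; rewrite ltr_pdivlMr ?mulr_gt0 //; last lra; move=> t2.
have sqrt_lt : Num.sqrt (M * t) < e / 2.
  rewrite -[X in _ < X]ger0_norm ?divr_ge0 ?ltW // -sqrtr_sqr ltr_sqrt ?exprn_gt0 ?divr_gt0 //.
  by rewrite expr_div_n ltr_pdivlMr ?exprn_gt0 //; nra.
have : g * t < e / 2 by rewrite ltr_pdivlMr //; nra.
lra.
Qed.

Lemma enorm_normalize_dist_le n (R : realType) (a b : 'cV[R]_n) : 0 < enorm a -> 0 < enorm b ->
  enorm ((enorm a)^-1 *: a - (enorm b)^-1 *: b) <= 2 * enorm (a - b) / enorm b.
Proof.
move=> a0 b0.
have -> : (enorm a)^-1 *: a - (enorm b)^-1 *: b =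
    ((enorm b - enorm a) / enorm b) *: ((enorm a)^-1 *: a) + (enorm b)^-1 *: (a - b).
  rewrite scalerA scalerBr addrA -scalerDl; congr (_ *: _ - _).
  by field; rewrite !gt_eqF.
apply: le_trans (ler_enormD _ _) _.
rewrite !enormZ normrM normfV [`|enorm b|]gtr0_norm //.
rewrite !(@gtr0_norm _ (_^-1)) ?invr_gt0 // mulVf ?gt_eqF // mulr1.
rewrite [(enorm b)^-1 * _]mulrC -mulrDl; apply: ler_wpM2r; first by rewrite invr_ge0 ltW.
have : `|enorm b - enorm a| <= enorm (a - b).
  rewrite ler_norml; have := lerB_enorm a b; have := lerB_enorm b a.
  by rewrite (enorm_distC b a) => h1 h2; apply/andP; split; lra.
lra.
Qed.

Section TmapContinuity.
Variables (R : realType) (m s : nat).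
Local Notation N := m.+1.
Implicit Types (B : 'M[R]_N) (x : 'cV[R]_N).
Local Notation resid := (@resid R m s).
Local Notation rho := (@rho R m s).

Lemma resid_continuous B xs : 0 < rho B xs -> forall e, 0 < e -> exists2 d, 0 < d &
  forall x, enorm (x - xs) < d -> enorm (resid B x - resid B xs) < e.
Proof.
move=> r0 e e0.
have [lam lam0 low] := injective_mulmx_lower_bound (rho_gt0_krylov_inj r0).
have := enorm_resid_dist_le lam0 low.
set M := (_ + _) * (2 * _); set g := mxsum_abs (pmx _ _) => dist_le.
have g0 : 0 <= g by exact: mxsum_abs_ge0.
have M0 : 0 <= M.
  have be0 := mxsum_abs_ge0 (B ^+ s); have ka0 := krylov_bound_ge0 s B.
  have xs0 : 0 <= enorm xs + 1 by rewrite addr_ge0 ?enorm_ge0.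
  have r0' := ltW r0.
  by rewrite /M mulr_ge0 ?addr_ge0 ?mulr_ge0 // addr_ge0.
have ka0 : 0 <= 2 * lam * krylov_bound s B by rewrite !mulr_ge0 ?krylov_bound_ge0.
have [d d0 small] := sqrt_linear_small M0 g0 e0.
exists (Num.min (Num.min 1 (2 * lam * krylov_bound s B + 1)^-1) d).
  by rewrite !lt_min ltr01 invr_gt0 d0 ltr_wpDl.
move=> x; rewrite !lt_min => /andP [/andP [x1 xk] xd].
apply: le_lt_trans (dist_le x (ltW x1) _) (small _ (enorm_ge0 _) xd).
move: xk; rewrite -[X in _ < X]mul1r ltr_pdivlMr ?ltr_wpDl //.
by have := enorm_ge0 (x - xs); nra.
Qed.

Lemma Tmap_continuous B xs : 0 < rho B xs -> forall e, 0 < e -> exists2 d, 0 < d &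
  forall x, enorm (x - xs) < d -> enorm (Tmap B s x - Tmap B s xs) < e.
Proof.
move=> r0 e e0; set e1 := Num.min e 1 * rho B xs / 2.
have e10 : 0 < e1 by rewrite divr_gt0 // mulr_gt0 // lt_min e0 ltr01.
have [d d0 close] := resid_continuous r0 e10.
exists d => // x /close dres.
have e1_le : e1 <= rho B xs / 2.
  by rewrite /e1 -mulrA ler_piMl ?ge_min ?lexx ?orbT // divr_ge0 // ltW.
have rx0 : 0 < rho B x.
  have := lerB_enorm (resid B xs) (resid B x).
  by rewrite enorm_distC; rewrite /rho in e1_le *; lra.
apply: le_lt_trans (enorm_normalize_dist_le rx0 r0) _.
rewrite ltr_pdivrMr // -ltr_pdivlMl // mulrC; apply: lt_le_trans dres _.
by rewrite /e1 -!mulrA ler_wpM2r ?ge_min ?lexx // mulr_ge0 ?invr_ge0 // ltW.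
Qed.

End TmapContinuity.

Lemma nondecreasing_bounded_increments (R : realType) (a : nat -> R) M :
  (forall k, a k <= a k.+1) -> (forall k, a k <= M) ->
  forall e, 0 < e -> exists N, forall k j, (N <= k)%N -> a j - a k < e.
Proof.
move=> a_nd aM e e0.
have a_mono k j : (k <= j)%N -> a k <= a j.
  move=> /subnK <-; elim: (j - k)%N => [|i IH]; first by rewrite add0n.
  by apply: le_trans IH _; rewrite addSn.
have hS : has_sup (range a) by split; [exists (a 0%N), 0%N | exists M => _ [k _ <-]].
have [_ [N _ <-] aN] := sup_adherent e0 hS.
exists N => k j Nk; have := a_mono _ _ Nk.
have : a j <= sup (range a) by apply: sup_upper_bound => //; exists j.
lra.
Qed.

Section ArnoldiCrossIteration.
Variables (R : realType) (m s : nat) (A : 'M[R]_m.+1) (v0 : 'cV[R]_m.+1).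
Hypothesis v0_unit : enorm v0 = 1.
Hypothesis v0_grade : (s.+1 <= grade A v0)%N.
Local Notation v := (ACI A s v0).
Local Notation rho := (rho s).
Local Notation w k := (Tmap A s (v k)).

Lemma ACIS k : v k.+1 = Tmap A^T s (w k).
Proof. by rewrite /ACI iterS. Qed.

Lemma rho_ACI0_gt0 : 0 < rho A v0.
Proof. exact: rho_gt0. Qed.

Lemma ACI_invariant k : enorm (v k) = 1 /\ rho A v0 <= rho A (v k).
Proof.
elim: k => [|k [vk1 rk]]; first by split.
have rk0 := lt_le_trans rho_ACI0_gt0 rk.
have le1 := rho_le_rho_trmx_Tmap vk1 rk0.
have le2 := rho_le_rho_trmx_Tmap (enorm_Tmap rk0) (lt_le_trans rk0 le1).
rewrite trmxK in le2; rewrite ACIS enorm_Tmap ?(lt_le_trans rk0 le1) //.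
by split => //; apply: le_trans rk (le_trans le1 le2).
Qed.

Lemma rho_ACI_gt0 k : 0 < rho A (v k).
Proof. exact: lt_le_trans rho_ACI0_gt0 (ACI_invariant k).2. Qed.

Lemma rho_ACI_interlace k : rho A (v k) <= rho A^T (w k) <= rho A (v k.+1).
Proof.
have [vk1 _] := ACI_invariant k; have rk0 := rho_ACI_gt0 k.
have le1 := rho_le_rho_trmx_Tmap vk1 rk0.
have le2 := rho_le_rho_trmx_Tmap (enorm_Tmap rk0) (lt_le_trans rk0 le1).
by rewrite trmxK -ACIS in le2; rewrite le1.
Qed.

Lemma ACI_steps_vanish e : 0 < e ->
  exists N, forall k, (N <= k)%N -> enorm (v k.+1 - v k) < e.
Proof.
move=> e0; have r0 := rho_ACI0_gt0.
have nd k : rho A (v k) <= rho A (v k.+1).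
  by have /andP [le1 le2] := rho_ACI_interlace k; exact: le_trans le1 le2.
have bd k : rho A (v k) <= mxsum_abs (A ^+ s).
  by have := rho_le_mxsum_abs s A (v k); rewrite (ACI_invariant k).1 mulr1.
have e'0 : 0 < e ^+ 2 * rho A v0 / 2 by rewrite divr_gt0 // mulr_gt0 // exprn_gt0.
have [N gap] := nondecreasing_bounded_increments nd bd e'0.
exists N => k Nk; have := gap k k.+1 Nk.
have /andP [le1 le2] := rho_ACI_interlace k.
have [vk1 rk] := ACI_invariant k.
have := Tmap_cross_dist vk1 (rho_ACI_gt0 k); rewrite -ACIS => cross gapk.
have sq : enorm (v k.+1 - v k) ^+ 2 * rho A v0 < e ^+ 2 * rho A v0.
  apply: le_lt_trans (_ : _ <= enorm (v k.+1 - v k) ^+ 2 * rho A^T (w k)) _.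
    by rewrite ler_wpM2l ?exprn_ge0 ?enorm_ge0 // (le_trans rk le1).
  by rewrite cross; lra.
by move: sq; rewrite ltr_pM2r // ltr_pXn2r // ?nnegrE ?enorm_ge0 ?ltW.
Qed.

Lemma ACI_limit_unit x : limit_points v x -> enorm x = 1.
Proof. exact: limit_points_enorm (fun k => (ACI_invariant k).1). Qed.

(* An annihilator q of x with deg q <= s would give
   rho(v_k) <= ||q(A)(v_k - x)|| -> 0, against rho(v_k) >= rho(v_0) > 0. *)
Lemma ACI_limit_grade x : limit_points v x -> (s.+1 <= grade A x)%N.
Proof.
move=> Lx; apply/contraT => /grade_le_annihilator [q [mq sq qx]].
have r0 := rho_ACI0_gt0; set g := mxsum_abs (pmx A q).
have g0 : 0 <= g by exact: mxsum_abs_ge0.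
have d0 : 0 < rho A v0 / (g + 1) by rewrite divr_gt0 //; lra.
have [k [_ hk]] := Lx _ d0 0%N.
have := rho_min A (v k) mq sq.
rewrite -[pmx A q *m v k]subr0 -qx -mulmxBr => h1.
have h2 := enorm_mulmx_le (pmx A q) (v k - x).
have h3 := (ACI_invariant k).2.
have h4 := enorm_ge0 (v k - x).
rewrite ltr_pdivlMr in hk; last lra.
suff : rho A v0 < rho A v0 by rewrite ltxx.
rewrite -/g in h2; nra.
Qed.

Lemma ACI_limit_fixed x : limit_points v x -> x = Tmap A^T s (Tmap A s x).
Proof.
move=> Lx; have x1 := ACI_limit_unit Lx.
have r0 : 0 < rho A x := rho_gt0 (ACI_limit_grade Lx).
have r1 := lt_le_trans r0 (rho_le_rho_trmx_Tmap x1 r0).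
apply/esym/subr0_eq/enorm_eq0/eqP; rewrite eq_le enorm_ge0 andbT.
apply/ler_addgt0Pr => e e0; rewrite add0r.
have e30 : 0 < e / 3 by rewrite divr_gt0.
have [d2 d20 cont2] := Tmap_continuous r1 e30.
have [d1 d10 cont1] := Tmap_continuous r0 d20.
have [N steps] := ACI_steps_vanish e30.
have m0 : 0 < Num.min d1 (e / 3) by rewrite lt_min d10.
have [k [Nk]] := Lx _ m0 N.
rewrite lt_min => /andP [hk1 hk2].
have := cont2 _ (cont1 _ hk1); rewrite -ACIS enorm_distC => hz.
apply: le_trans (ler_enorm_distD _ (v k.+1) _) _.
have := ler_enorm_distD (v k.+1) (v k) x; have := steps k Nk; lra.
Qed.

End ArnoldiCrossIteration.

Theorem theorem3p5 (R : realType) (n s : nat) (A : 'M[R]_n) (v0 : 'cV[R]_n) :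
  (1 <= s)%N -> (s < mdeg A)%N -> enorm v0 = 1 -> (s.+1 <= grade A v0)%N ->
  closed (limit_points (ACI A s v0)) /\
  connected (limit_points (ACI A s v0)) /\
  limit_points (ACI A s v0) `<=` SigmaA A s /\
  (forall v, limit_points (ACI A s v0) v -> v = Tmap A^T s (Tmap A s v)).
Proof.
move=> _ _; case: n A v0 => [|m] A v0 v0_unit v0_grade.
  by move: v0_unit; rewrite /enorm big_ord0 sqrtr0 => /eqP; rewrite eq_sym oner_eq0.
split; first exact: closed_limit_points.
split.
  apply: (connected_limit_points (r := 1)); last exact: ACI_steps_vanish.
  by move=> k; rewrite (ACI_invariant v0_unit v0_grade k).1.
split; last exact: ACI_limit_fixed.
by move=> x Lx; split; [exact: ACI_limit_unit Lx | exact: ACI_limit_grade Lx].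
Qed.
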